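(* Let $m\ge 1$, let $h$ be an $m$-times weak Lefschetz O-sequence, $n=h_1$, $R=K[x_1,\ldots,x_n]$. Then $R/\mathcal{W}_m(h)$ has $m$-times the weak Lefschetz property.
   Context: $K$ is an infinite field of characteristic $0$. An O-sequence is a sequence of non-negative integers that is the Hilbert function of some standard graded $K$-algebra; a finite O-sequence $h:1=h_0,\ldots,h_s$, $h_s\ne0$, has length $s$. $h$ is unimodal if $h_0<h_1<\cdots<h_k\ge h_{k+1}\ge\cdots\ge h_s$ for some $k$; then $\Delta h:=1,h_1-h_0,\ldots,h_k-h_{k-1}$. An O-sequence is $0$-times weak Lefschetz by convention; $h$ is an $m$-times weak Lefschetz O-sequence if it is unimodal and $\Delta h$ is an $(m-1)$-times weak Lefschetz O-sequence. Monomials are ordered with $x_1>\cdots>x_n$, rev-lex = degree reverse lexicographic order. Define $\mathcal{W}_0(g)=\mathrm{Lex}(g)$, the lex-segment ideal in $K[x_1,\ldots,x_{g_1}]$ with Hilbert function $g$ (degree-$d$ component spanned by the largest monomials of degree $d$ in lex order, as many as needed). For $m\ge1$, with $R'=K[x_1,\ldots,x_{n-1}]$: start with $I=\mathcal{W}_{m-1}(\Delta h)R$ (ideal of $R'$ extended to $R$); while the Hilbert function of $R/I$ differs from $h$, let $d_0$ be the least degree where they differ, $r=\dim_K(R/I)_{d_0}-h_{d_0}>0$, and add to $I$ the $r$ largest rev-lex monomials of degree $d_0$ not in $I$. The procedure terminates with an ideal $\mathcal{W}_m(h)$ such that $R/\mathcal{W}_m(h)$ has Hilbert function $h$. A standard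 graded algebra $A$ (Artinian in the paper) has the weak Lefschetz property (WLP) if there is $\ell\in A_1$ (a weak Lefschetz element, WLE) such that multiplication $\times\ell:A_d\to A_{d+1}$ has maximal rank for all $d\ge1$; $A$ has $m$-times the WLP if there are $\ell_1,\ldots,\ell_m\in A_1$ with $\ell_1$ a WLE for $A$ and $\ell_i$ a WLE for $A/(\ell_1,\ldots,\ell_{i-1})$ for $i=2,\ldots,m$. *)

From HB Require Import structures.
From mathcomp Require Import all_boot all_order all_algebra.
From mathcomp Require Import mpoly.
Set Implicit Arguments. Unset Strict Implicit. Unset Printing Implicit Defensive.
Import Order.TTheory GRing.Theory.
Local Open Scope ring_scope.

(* Combinatorics of monomials.  A monomial x_1^{a_1}...x_k^{a_k} of    *)
(* K[x_1,...,x_k] is represented by its exponent list [:: a_1; ...; a_k]. *)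

Fixpoint monos (k d : nat) : seq (seq nat) :=
  match k with
  | 0 => if d == 0%N then [:: [::]] else [::]
  | k'.+1 => flatten [seq [seq i :: u | u <- monos k' (d - i)] | i <- iota 0 d.+1]
  end.

Definition mdiv (v u : seq nat) : bool := all2 leq v u.

Definition divs (u : seq nat) : seq (seq nat) :=
  flatten [seq monos (size u) e | e <- iota 0 (sumn u).+1].
Definition divs_lt (u : seq nat) : seq (seq nat) :=
  flatten [seq monos (size u) e | e <- iota 0 (sumn u)].

Fixpoint lex_gt (u v : seq nat) : bool :=
  match u, v with
  | a :: u', b :: v' => (b < a)%N || ((a == b) && lex_gt u' v')
  | _, _ => false
  end.

(* u >_revlex v (for monomials of the same degree): the last nonzero
   entry of u - v is negative *)
Definition revlex_gt (u v : seq nat) : bool := lex_gt (rev v) (rev u).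

(* Sequences.  A finite sequence h_0,...,h_s is a [seq nat]; h_d := 0 for d > s. *)
Definition hv (h : seq nat) (d : nat) : nat := nth 0%N h d.

(* The peak index k: h_0 < ... < h_k >= h_{k+1} *)
Definition peak (h : seq nat) : nat :=
  find (fun i => (hv h i.+1 <= hv h i)%N) (iota 0 (size h)).

Definition unimodal (h : seq nat) : Prop :=
  exists k, (k < size h)%N /\
    (forall i, (i < k)%N -> (hv h i < hv h i.+1)%N) /\
    (forall i, (k <= i)%N -> (hv h i.+1 <= hv h i)%N).

Definition delta (h : seq nat) : seq nat :=
  1%N :: [seq (hv h i.+1 - hv h i)%N | i <- iota 0 (peak h)].

Definition gen_ideal (K : fieldType) (N : nat) (S : {mpoly K[N]} -> Prop)
    (f : {mpoly K[N]}) : Prop :=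
  exists k (g s : 'I_k -> {mpoly K[N]}),
    (forall i, S (s i)) /\ f = \sum_(i < k) g i * s i.

(* dim_K (R/J)_d = c : there are c homogeneous polynomials of degree d
   whose classes form a K-basis of (R/J)_d *)
Definition hilb_at (K : fieldType) (N : nat) (J : {mpoly K[N]} -> Prop)
    (d c : nat) : Prop :=
  exists b : 'I_c -> {mpoly K[N]},
    (forall i, b i \is d.-homog) /\
    (forall a : 'I_c -> K, J (\sum_(i < c) a i *: b i) -> forall i, a i = 0) /\
    (forall f : {mpoly K[N]}, f \is d.-homog ->
       exists a : 'I_c -> K, J (f - \sum_(i < c) a i *: b i)).

(* finite O-sequence 1 = h_0, ..., h_s, h_s <> 0: the Hilbert function of
   some standard graded K-algebra R/J, J a homogeneous ideal *)
Definition Oseq (K : fieldType) (h : seq nat) : Prop :=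
  (0 < size h)%N /\ last 0%N h <> 0%N /\
  exists (N : nat) (S : {mpoly K[N]} -> Prop),
    (forall f, S f -> exists e, f \is e.-homog) /\
    forall d, hilb_at (gen_ideal S) d (hv h d).

Fixpoint mWLseq (K : fieldType) (m : nat) (h : seq nat) : Prop :=
  match m with
  | 0 => Oseq K h
  | m'.+1 => Oseq K h /\ unimodal h /\ mWLseq K m' (delta h)
  end.

(* The monomial ideals Lex(g) and W_m(h), given by the sets of monomials
   they contain (as boolean predicates on exponent lists). *)

(* Lex(g) in K[x_1,...,x_{g_1}]: degree-d part = the (#monomials - g_d)
   lex-largest monomials of degree d *)
Definition lexI (g : seq nat) (u : seq nat) : bool :=
  let k := hv g 1 in let d := sumn u in
  (size u == k) &&
  (size [seq v <- monos k d | lex_gt v u] < size (monos k d) - hv g d)%N.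

(* monomials of degree d in the ideal generated by G0 (all degrees) and by
   the monomials of degree < d satisfying P *)
Definition inJ (G0 P : seq nat -> bool) (u : seq nat) : bool :=
  has (fun v => G0 v && mdiv v u) (divs u) ||
  has (fun v => P v && mdiv v u) (divs_lt u).

(* one step of the procedure at degree d: add the r largest rev-lex
   monomials of degree d not yet in the ideal, r = dim (R/I)_d - h_d
   (nothing added when this is <= 0) *)
Definition newdeg (n : nat) (h : seq nat) (G0 P : seq nat -> bool) (d : nat)
    (u : seq nat) : bool :=
  let C := [seq v <- monos n d | ~~ inJ G0 P v] in
  let r := (size C - hv h d)%N in
  inJ G0 P u || ((u \in C) && (size [seq v <- C | revlex_gt v u] < r)%N).

(* the ideal produced by the procedure, valid for monomials of degree <= d *)
Fixpoint Wupto (n : nat) (h : seq nat) (G0 : seq nat -> bool) (d : nat)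
    : seq nat -> bool :=
  match d with
  | 0 => newdeg n h G0 (fun _ => false) 0
  | d'.+1 => let P := Wupto n h G0 d' in
      fun u => if (sumn u <= d')%N then P u else newdeg n h G0 P d'.+1 u
  end.

Fixpoint Wm (m : nat) (h : seq nat) : seq nat -> bool :=
  match m with
  | 0 => lexI h
  | m'.+1 =>
      let n := hv h 1 in
      let W' := Wm m' (delta h) in
      (* monomials of W_{m-1}(Delta h) in K[x_1..x_{n-1}], viewed in R *)
      let G0 := fun v => (nth 0%N v n.-1 == 0%N) && W' (take n.-1 v) in
      fun u => (size u == n) && Wupto n h G0 (sumn u) u
  end.

Definition mon_ideal (K : fieldType) (n : nat) (W : seq nat -> bool)
    : {mpoly K[n]} -> Prop :=
  gen_ideal (fun f => exists u : 'X_{1..n}, W (tval (multinom_val u)) /\ f = 'X_[u]).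

(* Weak Lefschetz property of R/J.  Multiplication by l : A_d -> A_{d+1}
   has maximal rank iff it is injective or surjective. *)
Definition WLE (K : fieldType) (n : nat) (J : {mpoly K[n]} -> Prop)
    (l : {mpoly K[n]}) : Prop :=
  l \is 1.-homog /\
  forall d, (1 <= d)%N ->
    (forall f : {mpoly K[n]}, f \is d.-homog -> J (l * f) -> J f) \/
    (forall g : {mpoly K[n]}, g \is d.+1.-homog ->
       exists f, f \is d.-homog /\ J (g - l * f)).

Definition mWLP (K : fieldType) (n : nat) (J : {mpoly K[n]} -> Prop) (m : nat)
    : Prop :=
  exists l : 'I_m -> {mpoly K[n]},
    forall i : 'I_m,
      WLE (gen_ideal (fun f => J f \/ exists j : 'I_m, (j < i)%N /\ f = l j)) (l i).

(* Let n = h_1 and let k be the peak of h.  In degrees d <= k the ideal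
   W_{m-1}(Delta h)R has at most sum_{i <= d} (Delta h)_i <= h_d standard
   monomials, so the procedure adds no generators there; in degrees d > k
   every monomial of K[x_1, ..., x_{n-1}] lies in W_{m-1}(Delta h), because
   Delta h vanishes past k.  Hence multiplication by x_n is injective on the
   standard monomials of degree < k and every standard monomial of degree > k
   is divisible by x_n: x_n is a weak Lefschetz element, and moreover
   W_m(h) + (x_n) = W_{m-1}(Delta h)R + (x_n).  Induction on m gives the
   Lefschetz elements x_n, x_{n-1}, ..., and then 0 once the variables are
   used up, as the quotient vanishes in positive degrees.  All ideals involved
   are monomial, so every step is a statement about exponent vectors. *)

From HB Require Import structures.
From mathcomp Require Import all_boot all_order all_algebra.
From mathcomp Require Import mpoly.
From mathcomp Require Import zify.
Set Implicit Arguments. Unset Strict Implicit. Unset Printing Implicit Defensive.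
Import GRing.Theory.

Local Open Scope nat_scope.
Implicit Types (W P : pred (seq nat)) (u v w : seq nat).

Lemma mdivP v u :
  reflect (size v = size u /\ forall i, nth 0 v i <= nth 0 u i) (mdiv v u).
Proof.
rewrite /mdiv; elim: v u => [|a v IH] [|b u] /=.
- by apply: ReflectT; split => // i; rewrite nth_nil.
- by apply: ReflectF => -[].
- by apply: ReflectF => -[].
- apply: (iffP andP) => [[ab /IH [s H]]|[s H]]; first by split; [rewrite s | case].
  by split; [exact: (H 0) | apply/IH; split; [case: s | move=> i; exact: (H i.+1)]].
Qed.

Lemma mdiv_refl u : mdiv u u.
Proof. by apply/mdivP. Qed.

Lemma mdiv_trans v u w : mdiv v u -> mdiv u w -> mdiv v w.
Proof.
move=> /mdivP [s1 H1] /mdivP [s2 H2]; apply/mdivP; split; first by rewrite s1.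
by move=> i; apply: leq_trans (H1 i) (H2 i).
Qed.

Lemma size_mdiv v u : mdiv v u -> size v = size u.
Proof. by case/mdivP. Qed.

Lemma leq_sumn_mdiv v u : mdiv v u -> sumn v <= sumn u.
Proof. by elim: v u => [|a v IH] [|b u] //= /andP [ab /IH]; apply: leq_add. Qed.

Lemma mdiv_take k v u : mdiv v u -> mdiv (take k v) (take k u).
Proof.
move=> /mdivP [s H]; apply/mdivP; split; first by rewrite !size_take s.
move=> i; case: (ltnP i k) => ik; first by rewrite !nth_take.
by rewrite !nth_default // size_take_min (leq_trans (geq_minl _ _)).
Qed.

Lemma mem_monos k d u : (u \in monos k d) = (size u == k) && (sumn u == d).
Proof.
elim: k d u => [|k IH] d u; first by case: u => [|a u]; case: d => //=; rewrite andbF.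
apply/allpairsPdep/andP => [[i [v [id vm ->]]]|[/eqP su /eqP sd]].
  move: id vm; rewrite mem_iota add0n ltnS IH => id /andP [/eqP sv /eqP dv].
  by rewrite /= sv dv subnKC.
case: u su sd => [|a u] // [su] <-; exists a, u.
by split; rewrite ?mem_iota ?ltnS ?leq_addr ?IH ?su ?addKn ?eqxx.
Qed.

Lemma uniq_monos k d : uniq (monos k d).
Proof.
elim: k d => [|k IH] d; first by rewrite /=; case: (d == 0).
apply: allpairs_uniq_dep; [exact: iota_uniq | by move=> i _; apply: IH |].
by move=> [i u] [i' u'] _ _ /= [ei eu]; subst.
Qed.

Lemma mem_divs u v : (v \in divs u) = (size v == size u) && (sumn v <= sumn u).
Proof.
apply/flattenP/andP => [[s /mapP [e]]|[/eqP su sd]].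
  by rewrite mem_iota ltnS => /andP [_ ed] ->; rewrite mem_monos => /andP [-> /eqP ->].
exists (monos (size u) (sumn v)); last by rewrite mem_monos su !eqxx.
by apply/mapP; exists (sumn v); rewrite ?mem_iota ?ltnS.
Qed.

Lemma mem_divs_lt u v : (v \in divs_lt u) = (size v == size u) && (sumn v < sumn u).
Proof.
apply/flattenP/andP => [[s /mapP [e]]|[/eqP su sd]].
  by rewrite mem_iota => /andP [_ ed] ->; rewrite mem_monos => /andP [-> /eqP ->].
exists (monos (size u) (sumn v)); last by rewrite mem_monos su !eqxx.
by apply/mapP; exists (sumn v); rewrite ?mem_iota.
Qed.

Definition mideal (W : pred (seq nat)) (u : seq nat) : bool :=
  has (fun v => W v && mdiv v u) (divs u).

Lemma midealP W u : reflect (exists v, W v /\ mdiv v u) (mideal W u).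
Proof.
apply: (iffP hasP) => [[v _ /andP [? ?]]|[v [wv vu]]]; first by exists v.
by exists v; rewrite ?wv ?vu // mem_divs (size_mdiv vu) eqxx leq_sumn_mdiv.
Qed.

Lemma mideal_gen W u : W u -> mideal W u.
Proof. by move=> wu; apply/midealP; exists u; split => //; apply: mdiv_refl. Qed.

Lemma mideal_mdiv W v u : mideal W v -> mdiv v u -> mideal W u.
Proof.
by move=> /midealP [w [ww wv]] vu; apply/midealP; exists w; split => //; apply: mdiv_trans vu.
Qed.

Lemma inJP (G0 : pred (seq nat)) P u :
  reflect ((exists v, G0 v /\ mdiv v u) \/ (exists v, [/\ P v, mdiv v u & sumn v < sumn u]))
          (inJ G0 P u).
Proof.
apply: (iffP orP) => [[/midealP H|/hasP [v]]|[/midealP H|[v [pv vu vs]]]]; [by left| |by left|].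
  by rewrite mem_divs_lt => /andP [_ vs] /andP [pv vu]; right; exists v.
by right; apply/hasP; exists v; rewrite ?pv ?vu // mem_divs_lt (size_mdiv vu) eqxx.
Qed.

Lemma lex_gt_irr u : lex_gt u u = false.
Proof. by elim: u => //= a u ->; rewrite ltnn eqxx. Qed.

Lemma lex_gt_trans u v w : lex_gt u v -> lex_gt v w -> lex_gt u w.
Proof.
elim: u v w => [|a u IH] [|b v] [|c w] //=.
move=> /orP [ba|/andP [/eqP ab uv]] /orP [cb|/andP [/eqP bc vw]].
- by rewrite (ltn_trans cb ba).
- by rewrite -bc ba.
- by rewrite ab cb.
- by rewrite ab bc eqxx (IH _ _ uv vw) orbT.
Qed.

Lemma lex_gt_total u v : size u = size v -> u != v -> lex_gt u v || lex_gt v u.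
Proof.
elim: u v => [|a u IH] [|b v] //= [s] neq.
case: (ltngtP a b) => [ab|ba|ab] /=; rewrite ?orbT //.
by subst; apply: IH => //; apply: contra neq => /eqP ->.
Qed.

Lemma revlex_gt_irr u : revlex_gt u u = false.
Proof. exact: lex_gt_irr. Qed.

Lemma revlex_gt_trans u v w : revlex_gt u v -> revlex_gt v w -> revlex_gt u w.
Proof. by move=> uv vw; apply: lex_gt_trans vw uv. Qed.

Lemma revlex_gt_total u v : size u = size v -> u != v -> revlex_gt u v || revlex_gt v u.
Proof.
move=> s neq; rewrite orbC; apply: lex_gt_total; first by rewrite !size_rev.
by rewrite (inj_eq (can_inj revK)).
Qed.

Lemma sub_in_count (T : eqType) (s : seq T) (p q : pred T) :
  {in s, subpred p q} -> count p s <= count q s.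
Proof.
move=> pq; rewrite -(eq_in_count (a1 := predI p (mem s))) => [|x xs]; last by rewrite /= xs andbT.
by apply: sub_count => x /andP [px xs]; apply: pq.
Qed.

Lemma ltn_sub_in_count (T : eqType) (s : seq T) (p q : pred T) x :
  {in s, subpred p q} -> x \in s -> q x -> ~~ p x -> count p s < count q s.
Proof.
elim: s => [|y s' IH] //= pq; rewrite inE => /orP [/eqP ->|xs] qx npx.
  rewrite (negbTE npx) qx add1n ltnS; apply: sub_in_count => z zs.
  by apply: pq; rewrite inE zs orbT.
have pq' : {in s', subpred p q} by move=> z zs; apply: pq; rewrite inE zs orbT.
have := IH pq' xs qx npx; case py: (p y); last by move/leq_trans; apply; rewrite leq_addl.
by rewrite (pq y) // inE eqxx.
Qed.

(* Under a strict total order on [s], elements with at least [t] larger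
   elements have pairwise distinct ranks in [t, size s). *)
Lemma count_rank_geq (T : eqType) (s : seq T) (gt : rel T) t :
  uniq s -> {in s, irreflexive gt} -> {in s & &, transitive gt} ->
  {in s &, forall x y, x != y -> gt x y || gt y x} ->
  count (fun x => t <= count (gt^~ x) s) s <= size s - t.
Proof.
move=> us irr tr tot; pose r x := count (gt^~ x) s.
have r_lt x : x \in s -> r x < size s.
  by move=> xs; rewrite -(count_predT s) (ltn_sub_in_count (x := x)) // irr.
have r_mono x y : x \in s -> y \in s -> gt x y -> r x < r y.
  move=> xs ys gxy; apply: (ltn_sub_in_count (x := x)); rewrite ?irr //.
  by move=> z zs gzx; apply: (tr x).
have r_inj : {in s &, injective r}.
  move=> x y xs ys rxy; apply/eqP; apply: contraT => nxy.
  by case/orP: (tot x y xs ys nxy) => /r_mono; rewrite rxy ltnn; [apply | apply].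
rewrite -size_filter -(size_map r) -[size s - t](size_iota t); apply: uniq_leq_size.
  rewrite map_inj_in_uniq ?filter_uniq // => x y; rewrite !mem_filter.
  by move=> /andP [_ xs] /andP [_ ys]; apply: r_inj.
move=> y /mapP [x]; rewrite mem_filter => /andP [tr' xs] ->.
by rewrite mem_iota tr' /= subnKC ?r_lt //; apply: leq_trans tr' (ltnW (r_lt x xs)).
Qed.

(** * Standard monomials of W_m(h) *)

Section Procedure.
Variables (n : nat) (h : seq nat) (G0 : pred (seq nat)).

Definition Wbelow d : pred (seq nat) :=
  if d is d'.+1 then Wupto n h G0 d' else pred0.

Definition Wproc u : bool := (size u == n) && Wupto n h G0 (sumn u) u.

Definition cands d : seq (seq nat) := [seq v <- monos n d | ~~ inJ G0 Wproc v].

Lemma Wupto_sumn d u : sumn u = d -> Wupto n h G0 d u = newdeg n h G0 (Wbelow d) d u.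
Proof. by case: d => [|d] su //=; rewrite su ltnn. Qed.

Lemma Wupto_geq d v : sumn v <= d -> Wupto n h G0 d v = Wupto n h G0 (sumn v) v.
Proof.
elim: d => [|d IH] vd; first by move: vd; rewrite leqn0 => /eqP ->.
by case: (leqP (sumn v) d) => vd'; [rewrite /= vd' IH | have -> : sumn v = d.+1 by lia].
Qed.

Lemma inJ_Wbelow u : size u = n -> inJ G0 (Wbelow (sumn u)) u = inJ G0 Wproc u.
Proof.
move=> su; congr orb; apply: eq_in_has => v.
rewrite mem_divs_lt => /andP [/eqP sv lt]; congr andb.
rewrite /Wproc sv su eqxx /=; case: (sumn u) lt => [|d] //= lt.
by rewrite Wupto_geq.
Qed.

Lemma WprocE u : size u = n ->
  Wproc u = inJ G0 Wproc u ||
    ((u \in cands (sumn u)) &&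
     (size [seq v <- cands (sumn u) | revlex_gt v u] < size (cands (sumn u)) - hv h (sumn u))).
Proof.
move=> su; rewrite {1}/Wproc su eqxx /= Wupto_sumn // /newdeg inJ_Wbelow //.
suff -> : [seq v <- monos n (sumn u) | ~~ inJ G0 (Wbelow (sumn u)) v] = cands (sumn u) by [].
apply: eq_in_filter => v; rewrite mem_monos => /andP [/eqP sv /eqP <-].
by rewrite inJ_Wbelow.
Qed.

Lemma mideal_G0_Wproc u : size u = n -> mideal G0 u -> mideal Wproc u.
Proof.
move=> su /midealP [v [gv vu]]; apply/midealP; exists v; split => //.
by rewrite WprocE ?(size_mdiv vu) //; apply/orP; left; apply/orP; left; apply: mideal_gen.
Qed.

(* At most [h_d] monomials of degree [d] lie outside the ideal: those
   outside [cands d] are in it, and of [cands d] only the rev-lex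
   smallest [h_d] are left out. *)
Lemma count_notin_Wproc d : count (predC (mideal Wproc)) (monos n d) <= hv h d.
Proof.
pose r := size (cands d) - hv h d.
apply: leq_trans (_ : count (fun u => r <= count (revlex_gt^~ u) (cands d)) (cands d) <= _).
  rewrite /cands count_filter; apply: sub_in_count => u uM /= ncl.
  move: (uM); rewrite mem_monos => /andP [/eqP su /eqP sd].
  have : ~~ Wproc u by apply: contra ncl; apply: mideal_gen.
  rewrite WprocE // negb_or sd => /andP [nJ]; rewrite nJ andbT.
  have uC : u \in cands d by rewrite mem_filter nJ uM.
  by rewrite uC /= -leqNgt size_filter.
apply: leq_trans (count_rank_geq _ _ _ _ _) _.
- by rewrite filter_uniq // uniq_monos.
- by move=> x _; rewrite /= revlex_gt_irr.
- by move=> x y z _ _ _; apply: revlex_gt_trans.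
- move=> x y; rewrite !mem_filter !mem_monos.
  move=> /andP [_ /andP [/eqP sx _]] /andP [_ /andP [/eqP sy _]].
  by apply: revlex_gt_total; rewrite sx sy.
- by rewrite /r; move: (size (cands d)) (hv h d) => a b; lia.
Qed.

End Procedure.

Lemma count_notin_lexI g d : count (predC (mideal (lexI g))) (monos (hv g 1) d) <= hv g d.
Proof.
set M := monos (hv g 1) d.
apply: leq_trans (_ : count (fun u => size M - hv g d <= count (lex_gt^~ u) M) M <= _).
  apply: sub_in_count => u uM /= ncl.
  move: uM; rewrite mem_monos => /andP [/eqP su /eqP sd].
  have : ~~ lexI g u by apply: contra ncl; apply: mideal_gen.
  by rewrite /lexI su eqxx /= sd size_filter -leqNgt.
apply: leq_trans (count_rank_geq _ _ _ _ _) _.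
- exact: uniq_monos.
- by move=> x _; rewrite /= lex_gt_irr.
- by move=> x y z _ _ _; apply: lex_gt_trans.
- move=> x y; rewrite !mem_monos => /andP [/eqP sx _] /andP [/eqP sy _].
  by apply: lex_gt_total; rewrite sx sy.
- by move: (size M) (hv g d) => a b; lia.
Qed.

Definition Wext j g : pred (seq nat) :=
  fun v => (nth 0 v (hv g 1).-1 == 0) && Wm j (delta g) (take (hv g 1).-1 v).

Lemma WmS j g : Wm j.+1 g = Wproc (hv g 1) g (Wext j g).
Proof. by []. Qed.

Lemma count_notin_Wm j g d : count (predC (mideal (Wm j g))) (monos (hv g 1) d) <= hv g d.
Proof. by case: j => [|j]; [apply: count_notin_lexI | apply: count_notin_Wproc]. Qed.

Lemma size_Wm j g u : Wm j g u -> size u = hv g 1.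
Proof. by case: j => [|j] /andP [/eqP]. Qed.

(** * The step from W_j(Delta g) to W_{j+1}(g) *)

Lemma peak_spec g : unimodal g ->
  (forall i, i < peak g -> hv g i < hv g i.+1) /\ (forall i, peak g <= i -> hv g i.+1 <= hv g i).
Proof.
case=> k [ks [Hlt Hge]]; suff -> : peak g = k by [].
have ak : hv g k.+1 <= hv g k by apply: Hge.
have le : peak g <= k.
  apply: contraT; rewrite -ltnNge => lt.
  by have := before_find 0 lt; rewrite nth_iota // add0n ak.
apply/eqP; rewrite eqn_leq le /=; apply: contraT; rewrite -ltnNge => lt.
have hs : has (fun i => hv g i.+1 <= hv g i) (iota 0 (size g)).
  by apply/hasP; exists k; rewrite ?mem_iota.
by have := nth_find 0 hs; rewrite nth_iota ?(leq_ltn_trans le) // add0n leqNgt Hlt.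
Qed.

Lemma hv_deltaS g i : hv (delta g) i.+1 = if i < peak g then hv g i.+1 - hv g i else 0.
Proof.
rewrite /hv /=; case: ifP => H; first by rewrite (nth_map 0) ?size_iota // nth_iota.
by rewrite nth_default // size_map size_iota leqNgt H.
Qed.

Lemma sumn_delta_le g d : 1 <= hv g 0 -> (forall i, i < peak g -> hv g i < hv g i.+1) ->
  d <= peak g -> sumn [seq hv (delta g) i | i <- iota 0 d.+1] <= hv g d.
Proof.
move=> g0 Hlt; elim: d => [|d IH] dk; first by rewrite /= addn0.
rewrite -addn1 iotaD map_cat sumn_cat add0n.
have -> : sumn [seq hv (delta g) i | i <- iota d.+1 1] = hv (delta g) d.+1 by rewrite /= addn0.
rewrite hv_deltaS dk.
by have := IH (ltnW dk); have := Hlt d dk; lia.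
Qed.

Lemma leq_sumn_map (T : eqType) (s : seq T) (f g : T -> nat) :
  {in s, forall i, f i <= g i} -> sumn (map f s) <= sumn (map g s).
Proof.
elim: s => //= a s IH H; rewrite leq_add ?H ?mem_head // IH // => i ins.
by rewrite H // inE ins orbT.
Qed.

Lemma sumn_take_le k s : sumn (take k s) <= sumn s.
Proof. by rewrite -{2}(cat_take_drop k s) sumn_cat leq_addr. Qed.

Lemma sumn_take_eq k s : (forall i, k <= i -> nth 0 s i = 0) -> sumn (take k s) = sumn s.
Proof.
move=> H; rewrite -{2}(cat_take_drop k s) sumn_cat; suff -> : sumn (drop k s) = 0 by rewrite addn0.
have : forall i, nth 0 (drop k s) i = 0 by move=> i; rewrite nth_drop H ?leq_addr.
elim: (drop k s) => // a t IH z; have a0 : a = 0 := z 0.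
by rewrite /= a0 IH // => i; apply: (z i.+1).
Qed.

Lemma sumn_incr_nth u i : sumn (incr_nth u i) = (sumn u).+1.
Proof. by elim: u i => [|a u IH] [|i] //=; rewrite ?sumn_ncons ?IH ?addnS. Qed.

Lemma take_incr_nth k i u : k <= i -> i < size u -> take k (incr_nth u i) = take k u.
Proof.
move=> ki iu; apply: (@eq_from_nth _ 0); first by rewrite !size_take size_incr_nth iu.
move=> l; rewrite size_take size_incr_nth iu => lk.
have lk' : l < k by move: lk; case: (ltnP k (size u)) => // uk lk; lia.
by rewrite !nth_take // nth_incr_nth (_ : (i == l) = false) //; apply/eqP; lia.
Qed.

Lemma eq_from_take_pred N x y : 0 < N -> size x = N -> size y = N -> sumn x = sumn y ->
  take N.-1 x = take N.-1 y -> x = y.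
Proof.
move=> N1 sx sy ss tt.
have e z : size z = N -> z = take N.-1 z ++ [:: nth 0 z N.-1].
  by move=> sz; rewrite -{1}(cat_take_drop N.-1 z) (drop_nth 0) ?drop_oversize // sz; lia.
rewrite (e x sx) (e y sy) tt; congr (_ ++ [:: _]).
by move: ss; rewrite {1}(e x sx) {1}(e y sy) !sumn_cat tt /=; lia.
Qed.

Definition uses_var a b u : bool := has (fun t => 0 < nth 0 u t) (index_iota a b).

Lemma uses_varP a b u : reflect (exists2 t, a <= t < b & 0 < nth 0 u t) (uses_var a b u).
Proof.
by apply: (iffP hasP) => -[t]; rewrite ?mem_index_iota => tr p; exists t; rewrite ?mem_index_iota.
Qed.

Lemma uses_var_mono a a' b u : a' <= a -> uses_var a b u -> uses_var a' b u.
Proof.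
by move=> le /uses_varP [t /andP [ht tb] p]; apply/uses_varP; exists t; rewrite ?tb ?(leq_trans le).
Qed.

Lemma uses_var_incr_nth a b u i : i < a -> uses_var a b (incr_nth u i) = uses_var a b u.
Proof.
move=> ia; apply: eq_in_has => t; rewrite mem_index_iota => /andP [lo _].
by rewrite nth_incr_nth (_ : (i == t) = false) //; apply/eqP; lia.
Qed.

Lemma uses_var_sumn u : 0 < sumn u -> uses_var 0 (size u) u.
Proof.
elim: u => //= a u IH; case: (posnP a) => [->|ap] /= H.
  by have /uses_varP [t /andP [_ tu] p] := IH H; apply/uses_varP; exists t.+1.
by apply/uses_varP; exists 0.
Qed.

(* Multiplication by [x_t] on the standard monomials (those outside [V]):
   injective in degree [d], or onto those of degree [d+1]. *)
Definition mono_maxrank N (V : pred (seq nat)) t := forall d, 1 <= d ->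
  (forall u, size u = N -> sumn u = d -> V (incr_nth u t) -> V u) \/
  (forall w, size w = N -> sumn w = d.+1 -> nth 0 w t = 0 -> V w).

Lemma eq_mono_maxrank N V V' t : t < N ->
  (forall u, size u = N -> V u = V' u) -> mono_maxrank N V t -> mono_maxrank N V' t.
Proof.
move=> tN E H d d1; case: (H d d1) => [L|R]; [left|right] => u su sd.
  have su' : size (incr_nth u t) = N by rewrite size_incr_nth su tN.
  by rewrite -(E _ su) -(E _ su'); apply: L.
by rewrite -E //; apply: R.
Qed.

Section DeltaStep.
Variables (j : nat) (g : seq nat).
Hypotheses (g0 : hv g 0 = 1) (g_unimodal : unimodal g).
Local Notation n := (hv g 1).
Hypothesis (n_gt0 : 0 < n).
Local Notation k := (peak g).
Local Notation G0 := (Wext j g).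
Local Notation W' := (Wm j (delta g)).
Local Notation W := (Wm j.+1 g).

Lemma hv_delta1 : hv (delta g) 1 = n.-1.
Proof.
rewrite hv_deltaS; case: ifP => H; first by rewrite g0 subn1.
have := (peak_spec g_unimodal).2 0; rewrite leqNgt H g0 => /(_ isT).
by move: (hv g 1) n_gt0 => a; lia.
Qed.

Lemma mideal_Wext u : size u = n -> mideal G0 u = mideal W' (take n.-1 u).
Proof.
move=> su; apply/midealP/midealP => [[v [/andP [_ wv] vu]]|[w [ww wu]]].
  by exists (take n.-1 v); split => //; apply: mdiv_take.
have sw : size w = n.-1 by rewrite (size_Wm ww) hv_delta1.
exists (rcons w 0); split.
  by rewrite /Wext nth_rcons sw ltnn eqxx -cats1 -{1}sw take_size_cat.
apply/mdivP; split; first by rewrite size_rcons sw su; lia.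
move=> i; rewrite nth_rcons sw; case: ltnP => i1; last by case: (i == n.-1).
by have := (elimT (mdivP _ _) wu).2 i; rewrite nth_take.
Qed.

Lemma mideal_take_Wext u : n <= size u -> mideal W' (take n.-1 u) -> mideal W (take n u).
Proof.
move=> nu cu; have st : size (take n u) = n by rewrite size_takel.
by rewrite WmS; apply: mideal_G0_Wproc; rewrite // mideal_Wext // take_takel ?leq_pred.
Qed.

Lemma count_notin_Wext d : count (predC (mideal G0)) (monos n d) <=
  sumn [seq hv (delta g) i | i <- iota 0 d.+1].
Proof.
apply: leq_trans (_ : sumn [seq count (predC (mideal W')) (monos n.-1 i) | i <- iota 0 d.+1] <= _);
  last by apply: leq_sumn_map => i _; rewrite -hv_delta1 count_notin_Wm.
rewrite (_ : map _ _ = map (fun s => count (predC (mideal W')) s) (map (monos n.-1) (iota 0 d.+1)));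
  last by rewrite -map_comp.
rewrite -count_flatten -!size_filter -(size_map (take n.-1)); apply: uniq_leq_size.
  rewrite map_inj_in_uniq ?filter_uniq ?uniq_monos // => x y.
  rewrite !mem_filter !mem_monos.
  move=> /andP [_ /andP [/eqP sx /eqP dx]] /andP [_ /andP [/eqP sy /eqP dy]].
  by apply: eq_from_take_pred => //; rewrite dx dy.
move=> y /mapP [x]; rewrite mem_filter mem_monos => /andP [nc /andP [/eqP sx /eqP dx]] ->.
rewrite mem_filter; apply/andP; split; first by rewrite /= -mideal_Wext.
apply/flattenP; exists (monos n.-1 (sumn (take n.-1 x))).
  by apply/mapP; exists (sumn (take n.-1 x)); rewrite // mem_iota ltnS -dx sumn_take_le.
by rewrite mem_monos size_takel ?eqxx // sx leq_pred.
Qed.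

(* Up to the peak, [W_{j}(Delta g)R] alone already has at most [g_d]
   standard monomials, so the procedure adds nothing in these degrees. *)
Lemma size_cands_low d : d <= k -> size (cands n g G0 d) <= hv g d.
Proof.
move=> dk; rewrite size_filter; apply: leq_trans (_ : count (predC (mideal G0)) (monos n d) <= _).
  by apply: sub_count => x /=; apply: contra => cx; apply/orP; left.
apply: leq_trans (count_notin_Wext d) (sumn_delta_le _ _ dk); first by rewrite g0.
exact: (peak_spec g_unimodal).1.
Qed.

Lemma Wm_low_Wext u : W u -> sumn u <= k -> mideal G0 u.
Proof.
have [d] := ubnP (sumn u); elim: d u => // d IH v vd wv vk.
have sv : size v = n by case/andP: wv => /eqP.
move: wv; rewrite WmS WprocE // => /orP [/inJP [[w [gw wv]]|[w [ww wv ws]]]|/andP [_]].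
- by apply/midealP; exists w.
- by apply: mideal_mdiv (IH w _ ww _) wv; lia.
- by rewrite (_ : _ - _ = 0) //; apply/eqP; rewrite subn_eq0 size_cands_low.
Qed.

(* [Delta g] vanishes past the peak. *)
Lemma Wdelta_high w : size w = n.-1 -> k < sumn w -> mideal W' w.
Proof.
move=> sw kw; apply: contraT => nc.
have := count_notin_Wm j (delta g) (sumn w); rewrite hv_delta1.
have -> : hv (delta g) (sumn w) = 0.
  by case: (sumn w) kw => // s kw; rewrite hv_deltaS ifN // -leqNgt.
rewrite leqn0 => /eqP c0.
have : has (predC (mideal W')) (monos n.-1 (sumn w)).
  by apply/hasP; exists w; rewrite ?mem_monos ?sw ?eqxx.
by rewrite has_count c0.
Qed.

Lemma last_var_maxrank N : n <= N ->
  mono_maxrank N (fun u => mideal W (take n u) || uses_var n N u) n.-1.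
Proof.
move=> nN d d1; have nN' : n.-1 < N by lia.
case: (ltnP d k) => dk; [left => u su sd|right => w sw sd w0].
  have sx : size (take n u) = n by rewrite size_takel // su.
  rewrite uses_var_incr_nth ?prednK // => /orP [Hx|]; last by move->; rewrite orbT.
  have Hx' : mideal G0 (take n (incr_nth u n.-1)).
    have [v [wv vx]] := midealP _ _ Hx.
    have vk : sumn v <= k.
      rewrite (leq_trans (leq_sumn_mdiv vx)) // (leq_trans (sumn_take_le _ _)) //.
      by rewrite sumn_incr_nth sd.
    exact: mideal_mdiv (Wm_low_Wext wv vk) vx.
  rewrite mideal_Wext ?size_takel ?size_incr_nth ?su ?nN' // in Hx'.
  rewrite take_takel ?leq_pred // take_incr_nth ?su // in Hx'.
  by rewrite mideal_take_Wext ?su.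
case uv: (uses_var n N w); rewrite ?orbT // orbF.
have z i : n.-1 <= i -> nth 0 w i = 0.
  rewrite leq_eqVlt => /orP [/eqP <- //|ni].
  case: (ltnP i N) => iN; last by rewrite nth_default ?sw.
  apply/eqP; rewrite -leqn0 leqNgt; apply: contraFN uv => p.
  by apply/uses_varP; exists i; rewrite // iN; lia.
apply: mideal_take_Wext; first by rewrite sw.
apply: Wdelta_high; first by rewrite size_takel // sw; lia.
by rewrite sumn_take_eq // sd.
Qed.

Lemma Wm_mod_last_var N u : n <= N -> size u = N ->
  mideal W (take n u) || uses_var n.-1 N u = mideal W' (take n.-1 u) || uses_var n.-1 N u.
Proof.
move=> nN su; case uv: (uses_var n.-1 N u); rewrite ?orbT ?orbF //.
have u0 : nth 0 u n.-1 = 0.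
  apply/eqP; rewrite -leqn0 leqNgt; apply: contraFN uv => p.
  by apply/uses_varP; exists n.-1; rewrite // leqnn; lia.
apply/idP/idP => [H|]; last by apply: mideal_take_Wext; rewrite su.
have [v [wv vx]] := midealP _ _ H.
have sv : size v = n by rewrite (size_mdiv vx) size_takel // su.
have v0 : nth 0 v n.-1 = 0.
  have := (elimT (mdivP _ _) vx).2 n.-1; rewrite nth_take; last by lia.
  by rewrite u0 leqn0 => /eqP.
apply: mideal_mdiv (_ : mideal W' (take n.-1 v)) _.
  case: (leqP (sumn v) k) => vk; first by rewrite -mideal_Wext // Wm_low_Wext.
  apply: Wdelta_high; first by rewrite size_takel // sv; lia.
  rewrite sumn_take_eq // => i; rewrite leq_eqVlt => /orP [/eqP <- //|ni].
  by rewrite nth_default // sv; lia.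
by rewrite -[X in mdiv _ X](@take_takel _ n.-1 n) ?leq_pred //; apply: mdiv_take.
Qed.

End DeltaStep.

(* The part of [mWLseq] used by the proof. *)
Fixpoint WLchain j g : Prop :=
  if j is j'.+1 then [/\ hv g 0 = 1, unimodal g & WLchain j' (delta g)] else True.

(* [W_j(g)R + (x_{n-i+1}, ..., x_N)] in [N] variables, [n = g_1]. *)
Definition Wm_plus_vars j g N i : pred (seq nat) :=
  fun u => mideal (Wm j g) (take (hv g 1) u) || uses_var (hv g 1 - i) N u.

Lemma Wm_plus_vars_maxrank j g N i : WLchain j g -> hv g 1 <= N -> i < j -> i < hv g 1 ->
  mono_maxrank N (Wm_plus_vars j g N i) (hv g 1 - i).-1.
Proof.
elim: j g i => [|j IH] g // [|i] [g0 gu gc] nN ij ig.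
  rewrite subn0; apply: (eq_mono_maxrank _ _ (last_var_maxrank j g0 gu ig nN)) => [|u su].
    by lia.
  by rewrite /Wm_plus_vars subn0.
have n1 : 0 < hv g 1 by lia.
have d1 : hv (delta g) 1 = (hv g 1).-1 := hv_delta1 g0 gu n1.
have := IH (delta g) i gc; rewrite d1 => /(_ ltac:(lia) ij ltac:(lia)).
rewrite (_ : (hv g 1).-1 - i = hv g 1 - i.+1); last by lia.
apply: eq_mono_maxrank => [|u su]; first by lia.
rewrite /Wm_plus_vars d1 (_ : (hv g 1).-1 - i = hv g 1 - i.+1); last by lia.
case: (boolP (uses_var (hv g 1 - i.+1) N u)) => [_|nC]; rewrite ?orbT ?orbF //.
have nD : ~~ uses_var (hv g 1).-1 N u by apply: contra nC; apply: uses_var_mono; lia.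
by have := Wm_mod_last_var j g0 gu n1 nN su; rewrite (negbTE nD) !orbF.
Qed.

Local Open Scope ring_scope.

(** * Monomial ideals of K[x_1, ..., x_n] *)

Section GenIdeal.
Variables (K : fieldType) (n : nat) (S : {mpoly K[n]} -> Prop).
Local Notation J := (gen_ideal S).

Lemma gen_ideal0 : J 0.
Proof. by exists 0%N, (fun _ => 0), (fun _ => 0); split; [case | rewrite big_ord0]. Qed.

Lemma gen_idealM g s : S s -> J (g * s).
Proof. by move=> Ss; exists 1%N, (fun _ => g), (fun _ => s); split => //; rewrite big_ord1. Qed.

Lemma gen_idealD f1 f2 : J f1 -> J f2 -> J (f1 + f2).
Proof.
move=> [k1 [g1 [s1 [S1 ->]]]] [k2 [g2 [s2 [S2 ->]]]].
pose sp T (a : 'I_k1 -> T) (b : 'I_k2 -> T) i := match split i with inl x => a x | inr y => b y end.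
exists (k1 + k2)%N, (sp _ g1 g2), (sp _ s1 s2); split.
  by move=> i; rewrite /sp; case: (split i).
rewrite big_split_ord /sp; congr (_ + _); apply: eq_bigr => i _.
  by have -> : split (lshift k2 i) = inl i := unsplitK (inl i).
by have -> : split (rshift k1 i) = inr i := unsplitK (inr i).
Qed.

Lemma gen_ideal_all : J 1 -> forall f, J f.
Proof.
move=> [k [a [s [Ss e]]]] f; exists k, (fun i => f * a i), s; split; first exact: Ss.
by rewrite -{1}[f]mulr1 e mulr_sumr; apply: eq_bigr => i _; rewrite mulrA.
Qed.

End GenIdeal.

Section MonomialIdeals.
Variables (K : fieldType) (n : nat).
Implicit Types (f g s : {mpoly K[n]}) (mm : 'X_{1..n}) (V : pred (seq nat)).
Local Notation exps mm := (tval (multinom_val mm)).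

(* Membership in an ideal generated by monomials is decided monomial by monomial. *)
Definition supp_sat V f := forall mm, mm \in msupp f -> V (exps mm).

Lemma size_exps mm : size (exps mm) = n.
Proof. exact: size_tuple. Qed.

Lemma nth_exps mm (x : nat) (xn : (x < n)%N) : nth 0%N (exps mm) x = mm (Ordinal xn).
Proof. by rewrite (mnm_nth 0%N). Qed.

Lemma sumn_exps mm : sumn (exps mm) = mdeg mm.
Proof. by rewrite mdegE sumnE big_tuple; apply: eq_bigr => i _; rewrite mnm_tnth. Qed.

Lemma mdiv_exps mm mm' : (mm <= mm')%MM -> mdiv (exps mm) (exps mm').
Proof.
move=> /mnm_lepP le; apply/mdivP; split; first by rewrite !size_exps.
move=> i; case: (ltnP i n) => ix; first by rewrite !(nth_exps _ ix).
by rewrite nth_default // size_exps.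
Qed.

Lemma gen_ideal_supp_sat (S : {mpoly K[n]} -> Prop) V :
  (forall mm mm', V (exps mm) -> (mm <= mm')%MM -> V (exps mm')) ->
  (forall s, S s -> supp_sat V s) ->
  forall f, gen_ideal S f -> supp_sat V f.
Proof.
move=> up HS f [k [g [s [Ss ->]]]] mm /msupp_sum_le /flattenP [x /mapP [i _ ->]].
move=> /msuppM_le /allpairsP [[m1 m2] [_ m2s ->]].
by apply: up (HS _ (Ss i) _ m2s) _; apply: lem_addl.
Qed.

Lemma supp_sat_gen_ideal (S : {mpoly K[n]} -> Prop) V :
  (forall mm, V (exps mm) -> exists2 m0, S 'X_[m0] & (m0 <= mm)%MM) ->
  forall f, supp_sat V f -> gen_ideal S f.
Proof.
move=> HV f; rewrite /supp_sat {2}(mpolyE f); elim: (msupp f) => [|mm r IH] H.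
  by rewrite big_nil; apply: gen_ideal0.
rewrite big_cons; apply: gen_idealD; last by apply: IH => m' mr; apply: H; rewrite inE mr orbT.
have [m0 Sm0 le] := HV mm (H mm (mem_head _ _)).
by rewrite -(submK le) mpolyXD scalerAl; apply: gen_idealM.
Qed.

Definition mvar (t : nat) : 'X_{1..n} := [multinom ((j : nat) == t) | j < n].

Lemma exps_add_mvar mm t : (t < n)%N -> exps (mvar t + mm)%MM = incr_nth (exps mm) t.
Proof.
move=> tn; apply: (@eq_from_nth _ 0%N); first by rewrite size_incr_nth !size_exps tn.
move=> i; rewrite size_exps => ix.
by rewrite (nth_exps _ ix) nth_incr_nth mnmDE (nth_exps _ ix) mnmE eq_sym.
Qed.

Lemma mdeg_mvar t : (t < n)%N -> mdeg (mvar t) = 1%N.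
Proof.
move=> tn; rewrite mdegE (bigD1 (Ordinal tn)) //= mnmE eqxx big1 // => x nx.
by rewrite mnmE; case: eqP nx => // e _; case: eqP => // xt; case: e; apply: val_inj.
Qed.

Lemma mvar_le t mm : (t < n)%N -> (0 < nth 0%N (exps mm) t)%N -> (mvar t <= mm)%MM.
Proof.
by move=> tn p; apply/mnm_lepP => x; rewrite mnmE; case: eqP => // e; rewrite (mnm_nth 0%N) e.
Qed.

Lemma mvar_divide t d g : (t < n)%N -> g \is d.+1.-homog ->
  exists2 f, f \is d.-homog &
    {in msupp (g - 'X_[mvar t] * f), forall mm, mm \in msupp g /\ ~~ (mvar t <= mm)%MM}.
Proof.
move=> tn gh; pose U := mvar t.
exists (\sum_(mm <- msupp g) (if (U <= mm)%MM then g@_mm *: 'X_[mm - U] else 0)).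
  rewrite big_seq; apply: rpred_sum => mm mmg; case: ifP => le; last exact: rpred0.
  apply: rpredZ; rewrite dhomogX; apply/eqP.
  have := mdegD (mm - U)%MM U; rewrite submK // mdeg_mvar // (dhomog_mf gh mmg) => e.
  by change (mdeg (mm - U)%MM = d); lia.
have -> : g - 'X_[U] * (\sum_(mm <- msupp g) (if (U <= mm)%MM then g@_mm *: 'X_[mm - U] else 0))
  = \sum_(mm <- msupp g) (if (U <= mm)%MM then 0 else g@_mm *: 'X_[mm]).
  rewrite {1}(mpolyE g) mulr_sumr -sumrB; apply: eq_bigr => mm _; case: ifP => le.
    by rewrite -scalerAr -mpolyXD addmC submK // subrr.
  by rewrite mulr0 subr0.
move=> m' /msupp_sum_le /flattenP [x /mapP [mm]]; rewrite mem_filter /= => mmg ->.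
case: ifP => le; first by rewrite mcoeff_msupp mcoeff0 eqxx.
by move=> /msuppZ_le; rewrite msuppX inE => /eqP ->; rewrite le.
Qed.

Section WLE.
Variables (J : {mpoly K[n]} -> Prop) (V : pred (seq nat)).
Hypothesis JE : forall f, J f <-> supp_sat V f.

Lemma WLE_mvar t : (t < n)%N -> mono_maxrank n V t -> WLE J 'X_[mvar t].
Proof.
move=> tn CW; split; first by rewrite dhomogX; apply/eqP; apply: mdeg_mvar.
move=> d d1; case: (CW d d1) => [inj|surj]; [left => f fh /JE H|right => g gh].
  apply/JE => mm mmf; apply: (inj _ (size_exps mm)); first by rewrite sumn_exps (dhomog_mf fh).
  by rewrite -exps_add_mvar //; apply: H; rewrite mcoeff_msupp mulrC mcoeffMX -mcoeff_msupp.
have [f fh Hf] := mvar_divide tn gh; exists f; split => //.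
apply/JE => mm /Hf [mmg nle]; apply: surj; rewrite ?size_exps ?sumn_exps ?(dhomog_mf gh) //.
by apply/eqP; rewrite -leqn0 leqNgt; apply: contra nle; apply: mvar_le.
Qed.

Lemma WLE_0 : (forall u, size u = n -> (0 < sumn u)%N -> V u) -> WLE J 0.
Proof.
move=> Vpos; split => [|d _]; first exact: rpred0.
right => g gh; exists 0; split; rewrite ?rpred0 // mulr0 subr0.
apply/JE => mm mmg; apply: Vpos; rewrite ?size_exps // sumn_exps (dhomog_mf gh) //.
Qed.

End WLE.

(* [x_{n-i}], whose exponent has index [(n - i).-1]; [0] once [i >= n]. *)
Definition lvar (i : nat) : {mpoly K[n]} := if (i < n)%N then 'X_[mvar (n - i).-1] else 0.

Lemma gen_ideal_lvarE (W : pred (seq nat)) m i : (i <= m)%N -> forall f,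
  gen_ideal (fun f => mon_ideal W f \/ exists j : 'I_m, (j < i)%N /\ f = lvar j) f <->
  supp_sat (fun u => mideal W u || uses_var (n - i) n u) f.
Proof.
move=> im f; split.
  apply: gen_ideal_supp_sat => [mm mm' /orP [H|/uses_varP [t tr p]] le|s [Hs|[j [ji ->]]]].
  - by rewrite (mideal_mdiv H) ?mdiv_exps.
  - apply/orP; right; apply/uses_varP; exists t => //; apply: leq_trans p _.
    by have := (elimT (mdivP _ _) (mdiv_exps le)).2 t.
  - move=> mm mms; apply/orP; left; move: mm mms; apply: gen_ideal_supp_sat Hs.
      by move=> mm mm' H le; rewrite (mideal_mdiv H) ?mdiv_exps.
    by move=> s' [u [Wu ->]] mm; rewrite msuppX inE => /eqP ->; apply: mideal_gen.
  rewrite /lvar; case: ifP => jn mm; last by rewrite mcoeff_msupp mcoeff0 eqxx.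
  rewrite msuppX inE => /eqP ->; apply/orP; right; apply/uses_varP; exists (n - j).-1.
    by apply/andP; split; lia.
  have tn : ((n - j).-1 < n)%N by lia.
  by rewrite (nth_exps _ tn) mnmE /= eqxx.
apply: supp_sat_gen_ideal => mm /orP [/midealP [v [Wv vmm]]|/uses_varP [t /andP [t1 t2] p]].
  have sv : size v = n by rewrite (size_mdiv vmm) size_exps.
  pose m0 : 'X_{1..n} := Multinom (Tuple (introT eqP sv)).
  exists m0; first by left; rewrite -[X in mon_ideal _ X]mul1r; apply: gen_idealM; exists m0.
  apply/mnm_lepP => x; rewrite !(mnm_nth 0%N).
  by have := (elimT (mdivP _ _) vmm).2 x.
have j1 : ((n - t).-1 < m)%N by lia.
exists (mvar t); last exact: mvar_le.
right; exists (Ordinal j1); split; first by rewrite /=; lia.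
by rewrite /lvar /= ifT; [congr 'X_[mvar _]|]; lia.
Qed.

End MonomialIdeals.

Lemma dhomog0_const (K : fieldType) n (p : {mpoly K[n]}) : p \is 0.-homog -> p = (p@_0%MM)%:MP.
Proof.
move=> p0; apply/mpolyP => m; rewrite mcoeffC; case: (eqVneq m 0%MM) => [->|nm].
  by rewrite mulr1.
by rewrite mulr0 (dhomog_nemf_coeff p0) // mdeg_eq0.
Qed.

Section HilbertZero.
Variables (K : fieldType) (N : nat) (S : {mpoly K[N]} -> Prop).
Local Notation J := (gen_ideal S).

Lemma hilb_at_unit d c : J 1 -> hilb_at J d c -> c = 0%N.
Proof.
case: c => [|c] // J1 [b [_ [bind _]]].
have := bind (fun _ => 1) (gen_ideal_all J1 _) ord0.
by move/eqP; rewrite oner_eq0.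
Qed.

Lemma hilb_at0_unit : hilb_at J 0 0 -> J 1.
Proof.
move=> [b [_ [_ bspan]]]; have [a Ja] := bspan 1 (dhomog1 _ _).
by rewrite big_ord0 subr0 in Ja.
Qed.

(* Two constants are linearly dependent, so [(R/J)_0] has dimension at most one. *)
Lemma hilb_at0_le1 c : hilb_at J 0 c -> (c <= 1)%N.
Proof.
case: c => [|[|c]] // [b [bh [bind _]]].
pose i0 : 'I_c.+2 := ord0; pose i1 : 'I_c.+2 := Ordinal (isT : (1 < c.+2)%N).
have bC i : b i = ((b i)@_0%MM)%:MP by apply: dhomog0_const.
pose a x0 x1 : 'I_c.+2 -> K := fun i => if i == i0 then x0 else if i == i1 then x1 else 0.
have sumE x0 x1 : \sum_(i < c.+2) a x0 x1 i *: b i = x0 *: b i0 + x1 *: b i1.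
  rewrite (bigD1 i0) // (bigD1 i1) //= big1 ?addr0 => [|i /andP [ni0 ni1]].
    by rewrite /a eqxx.
  by rewrite /a (negbTE ni0) (negbTE ni1) scale0r.
set y0 := (b i0)@_0%MM; set y1 := (b i1)@_0%MM.
have y1_0 : y1 = 0.
  have := bind (a y1 (- y0)); rewrite sumE (bC i0) (bC i1) -/y0 -/y1.
  rewrite -!mul_mpolyC -!mpolyCM -mpolyCD mulNr (mulrC y1) subrr mpolyC0.
  move=> /(_ (gen_ideal0 _) i0).
  by rewrite /a eqxx.
have := bind (a 0 1); rewrite sumE scale0r add0r scale1r (bC i1) -/y1 y1_0.
by move=> /(_ (gen_ideal0 _) i1); rewrite /a /= => /eqP; rewrite oner_eq0.
Qed.

End HilbertZero.

Lemma Oseq_hv0 (K : fieldType) g : Oseq K g -> hv g 0 = 1%N.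
Proof.
case=> sz [lst [N [S [_ Hh]]]].
have := hilb_at0_le1 (Hh 0%N); case e: (hv g 0) => [|[|c]] // _.
have J1 := hilb_at0_unit (eq_ind _ _ (Hh 0%N) _ e).
by have := hilb_at_unit J1 (Hh (size g).-1); rewrite /hv nth_last => /lst.
Qed.

Lemma mWLseq_WLchain (K : fieldType) j g : mWLseq K j g -> WLchain j g.
Proof. by elim: j g => [|j IH] g //= [O [U H]]; split; [apply: Oseq_hv0 O | | apply: IH]. Qed.

(* The Lefschetz elements are variables. *)
Theorem proposition3p2 (K : fieldType)
    (Kchar0 : [pchar K] =i pred0)
    (Kinf : forall s : seq K, exists x : K, x \notin s)
    (m : nat) (hm : (1 <= m)%N) (h : seq nat) (hWL : mWLseq K m h)
    (n : nat) (hn : n = hv h 1) :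
  mWLP (@mon_ideal K n (Wm m h)) m.
Proof.
exists (fun i : 'I_m => lvar K n i) => i.
have JE := @gen_ideal_lvarE K n (Wm m h) m i (ltnW (ltn_ord i)).
case: (ltnP i n) => iN; rewrite /lvar ?iN; last first.
  rewrite ltnNge iN; apply: (WLE_0 JE) => u su /uses_var_sumn.
  by rewrite su (_ : n - i = 0)%N ?orbT //; lia.
apply: (WLE_mvar JE); first by lia.
subst n; have := Wm_plus_vars_maxrank (mWLseq_WLchain hWL) (leqnn _) (ltn_ord i) iN.
by apply: eq_mono_maxrank => [|u su]; rewrite /Wm_plus_vars ?take_oversize ?su //; lia.
Qed.
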